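(* Let $n$ be a positive integer and let $\lambda$ be a partition with at most $n$ nonzero parts. Then the number $|\mathrm{SVT}(\lambda,n)|$ of set-valued tableaux of shape $\lambda$ with entries in $[n]$ is odd.
   Context: A partition $\lambda$ is identified with its Young diagram $\{(i,j)\in\mathbb{Z}_{>0}^2 : j\le\lambda_i\}$ (row index $i$ increasing downward). A set-valued tableau of shape $\lambda$ with entries in $[n]=\{1,\dots,n\}$ assigns a non-empty subset $T_{i,j}\subseteq[n]$ to each box $(i,j)\in\lambda$ such that $\max T_{i,j}\le\min T_{i,j+1}$ whenever $(i,j),(i,j+1)\in\lambda$ and $\max T_{i,j}<\min T_{i+1,j}$ whenever $(i,j),(i+1,j)\in\lambda$; $\mathrm{SVT}(\lambda,n)$ is the set of these. *)

From mathcomp Require Import all_boot.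
Set Implicit Arguments. Unset Strict Implicit. Unset Printing Implicit Defensive.

Definition is_partition (la : seq nat) : bool :=
  sorted geq la && all (fun k => 0 < k) la.

(* Boxes are 0-indexed: (i,j) in la  iff  i < size la and j < la_i. *)
Definition in_shape (la : seq nat) (i j : nat) : bool :=
  (i < size la) && (j < nth 0 la i).

(* Entries in [n] = {1..n} are represented by 'I_n = {0..n-1}
   (order-preserving relabelling k |-> k-1).
   A filling assigns a subset of 'I_n to each cell of the bounding
   rectangle 'I_(size la) x 'I_(head 0 la); cells outside the shape get
   the empty set (so fillings of the shape correspond bijectively to
   these canonical finite functions). *)
Definition filling (la : seq nat) (n : nat) : finType :=
  {ffun 'I_(size la) * 'I_(head 0 la) -> {set 'I_n}}.

Definition maxS n (A : {set 'I_n}) : nat := \max_(x in A) (x : nat).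
Definition minS n (A : {set 'I_n}) : nat := \big[minn/n]_(x in A) (x : nat).

Definition is_svt (la : seq nat) (n : nat) (T : filling la n) : bool :=
  [forall c : 'I_(size la) * 'I_(head 0 la),
     let i := (c.1 : nat) in let j := (c.2 : nat) in
     if in_shape la i j then
       [&& T c != set0,
           [forall c' : 'I_(size la) * 'I_(head 0 la),
              ((c'.1 : nat) == i) && ((c'.2 : nat) == j.+1)
                && in_shape la c'.1 c'.2 ==> (maxS (T c) <= minS (T c'))]
         &
           [forall c' : 'I_(size la) * 'I_(head 0 la),
              ((c'.1 : nat) == i.+1) && ((c'.2 : nat) == j)
                && in_shape la c'.1 c'.2 ==> (maxS (T c) < minS (T c'))]]
     else T c == set0].

Definition SVT (la : seq nat) (n : nat) : {set filling la n} :=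
  [set T | is_svt T].

From HB Require Import structures.
From mathcomp Require Import all_boot zify.
Set Implicit Arguments. Unset Strict Implicit. Unset Printing Implicit Defensive.

(* Filling every box of row i with {i} gives a set-valued tableau (as
   size la <= n).  Call a box of row i defective when its entry is not {i},
   and toggle the element i in the first defective box in reading order.
   The boxes to its left and above hold their row index, and column
   strictness forces every entry of row i to be at least i, so the result is
   again a set-valued tableau, with the same first defective box.  This
   involution of SVT(la, n) has the row tableau as its only fixed point. *)

HB.instance Definition _ := SemiGroup.isComLaw.Build nat minn minnA minnC.

Section InvolutionParity.
Variables (T : finType) (g : T -> T).

Lemma odd_card_involution (A : {set T}) :
  {in A, forall x, g x \in A} -> {in A, involutive g} ->
  odd #|A| = odd #|[set x in A | g x == x]|.
Proof.
have [k] := ubnP #|A|; elim: k A => // k IH A ltAk gA gK.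
have [x /andP[xA gxNx]|] := pickP [pred x in A | g x != x]; last first.
  move=> fixA; suff -> : [set x in A | g x == x] = A by [].
  apply/setP => x; rewrite inE.
  by case xA: (x \in A) => //; move: (fixA x); rewrite /= xA => /negbFE ->.
have pairA : [set x; g x] \subset A by rewrite subUset !sub1set xA gA.
set A' := A :\: [set x; g x].
have cardA : #|A| = #|A'| + 2.
  by rewrite -(cardsID [set x; g x] A) (setIidPr pairA) cards2 eq_sym gxNx addnC.
have gA' : {in A', forall y, g y \in A'}.
  move=> y; rewrite !inE negb_or => /andP[/andP[yx ygx] yA].
  rewrite gA // andbT negb_or; apply/andP; split.
    by apply: contra ygx => /eqP <-; rewrite gK.
  by apply: contra yx => /eqP/(congr1 g); rewrite !gK // => ->.
have fixA' : [set y in A' | g y == y] = [set y in A | g y == y].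
  apply/setP => y; rewrite !inE; case: (boolP (y \in A)) => yA; rewrite ?andbF //.
  case: (boolP (g y == y)) => [/eqP gyy|]; rewrite ?andbF // !andbT.
  apply/norP; split; apply: contra gxNx => /eqP eyx; first by rewrite -eyx gyy.
  by rewrite -{2}(gK x xA) -eyx gyy eyx.
have ltA'k : #|A'| < k by move: ltAk; rewrite cardA; lia.
have gK' : {in A', involutive g} by move=> y; rewrite !inE => /andP[_ /gK].
by rewrite cardA addn2 /= negbK IH ?fixA'.
Qed.

End InvolutionParity.

Section MinMax.
Variable n : nat.
Implicit Types A B : {set 'I_n}.

Lemma minS_leq A (x : 'I_n) : x \in A -> minS A <= x.
Proof. by move=> xA; rewrite /minS (bigD1 x) //= geq_minl. Qed.

Lemma maxS_geq A (x : 'I_n) : x \in A -> x <= maxS A.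
Proof. exact: (leq_bigmax_cond (F := fun y : 'I_n => y : nat)). Qed.

Lemma minS_geqP A m : m <= n -> reflect {in A, forall x : 'I_n, m <= x} (m <= minS A).
Proof.
move=> le_mn; apply: (iffP idP) => [le_m_min x /minS_leq|le_mA].
  exact: leq_trans.
by rewrite /minS; elim/big_ind: _ => // a b le_ma le_mb; rewrite leq_min le_ma.
Qed.

Lemma leq_maxS_minSP A B :
  reflect {in A & B, forall x y : 'I_n, x <= y} (maxS A <= minS B).
Proof.
apply: (iffP idP) => [le_AB x y /maxS_geq le_xA /minS_leq le_By|le_AB].
  exact: leq_trans le_xA (leq_trans le_AB le_By).
apply/bigmax_leqP => x xA; apply/minS_geqP; first exact: ltnW.
by move=> y; apply: le_AB.
Qed.

Lemma ltn_maxS_minSP A B : A != set0 ->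
  reflect {in A & B, forall x y : 'I_n, x < y} (maxS A < minS B).
Proof.
move=> A_neq0; apply: (iffP idP) => [lt_AB x y /maxS_geq le_xA /minS_leq le_By|lt_AB].
  exact: leq_ltn_trans le_xA (leq_trans lt_AB le_By).
rewrite -card_gt0 in A_neq0.
have [a aA maxA] := eq_bigmax_cond (fun y : 'I_n => y : nat) A_neq0.
by rewrite /maxS maxA; apply/minS_geqP => // y; apply: lt_AB.
Qed.

End MinMax.

Lemma in_shape_up la i j :
  is_partition la -> in_shape la i.+1 j -> in_shape la i j.
Proof.
case/andP=> /(sortedP 0) le_la _ /andP[lt_i1 lt_j].
by rewrite /in_shape ltnW //=; apply: leq_trans lt_j (le_la i lt_i1).
Qed.

Section Toggle.
Variable n : nat.
Implicit Types A : {set 'I_n}.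

Definition row_set i : {set 'I_n} := [set y : 'I_n | val y == i].

Definition toggle A i : {set 'I_n} := [set y | (val y == i) (+) (y \in A)].

Lemma toggleK i : involutive (toggle^~ i).
Proof. by move=> A; apply/setP => y; rewrite !inE addKb. Qed.

Lemma toggle0 i : toggle set0 i = row_set i.
Proof. by apply/setP => y; rewrite !inE addbF. Qed.

Lemma toggle_row_set i : toggle (row_set i) i = set0.
Proof. by rewrite -toggle0 toggleK. Qed.

Lemma toggle_eq0 A i : (toggle A i == set0) = (A == row_set i).
Proof. by rewrite -(toggle_row_set i) (can_eq (toggleK i)). Qed.

Lemma toggle_eq_row_set A i : (toggle A i == row_set i) = (A == set0).
Proof. by rewrite -toggle0 (can_eq (toggleK i)). Qed.

Lemma mem_toggle A i y : y \in toggle A i -> (val y == i) || (y \in A).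
Proof. by rewrite inE; case: (val y == i). Qed.

Lemma toggle_neq A i : i < n -> toggle A i != A.
Proof.
move=> lt_in; apply/eqP => /setP/(_ (Ordinal lt_in)).
by rewrite inE eqxx; case: (_ \in A).
Qed.

End Toggle.

Section Tableaux.
Variables (la : seq nat) (n : nat).
Local Notation cell := ('I_(size la) * 'I_(head 0 la))%type.
Implicit Types (T : filling la n) (b c d : cell).

Definition in_la c := in_shape la c.1 c.2.

Record svt_spec T : Prop := SvtSpec {
  svt_out c : ~~ in_la c -> T c = set0;
  svt_neq0 c : in_la c -> T c != set0;
  svt_row c d : in_la c -> in_la d -> d.1 = c.1 :> nat -> d.2 = c.2.+1 :> nat ->
    {in T c & T d, forall x y : 'I_n, x <= y};
  svt_col c d : in_la c -> in_la d -> d.1 = c.1.+1 :> nat -> d.2 = c.2 :> nat ->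
    {in T c & T d, forall x y : 'I_n, x < y}
}.

Lemma is_svtP T : is_svt T <-> svt_spec T.
Proof.
split=> [/forallP svtT|[T_out T_neq0 T_row T_col]].
  split=> [c c_out|c c_in|c d c_in d_in e1 e2|c d c_in d_in e1 e2];
    move: (svtT c); rewrite /= -/(in_la c).
  - by rewrite (negbTE c_out) => /eqP.
  - by rewrite c_in => /and3P[].
  - rewrite c_in => /and3P[_ /forallP/(_ d) + _].
    by rewrite -/(in_la d) d_in e1 e2 !eqxx => /leq_maxS_minSP.
  - rewrite c_in => /and3P[c_neq0 _ /forallP/(_ d)].
    by rewrite -/(in_la d) d_in e1 e2 !eqxx => /(ltn_maxS_minSP _ c_neq0).
apply/forallP => c /=; rewrite -/(in_la c); case: ifPn => [c_in|/T_out->//].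
apply/and3P; split; first exact: T_neq0.
  apply/forallP => d; apply/implyP => /andP[/andP[/eqP e1 /eqP e2] d_in].
  exact/leq_maxS_minSP/T_row.
apply/forallP => d; apply/implyP => /andP[/andP[/eqP e1 /eqP e2] d_in].
exact/(ltn_maxS_minSP _ (T_neq0 c c_in))/T_col.
Qed.

Definition reading_index c := c.1 * head 0 la + c.2.

Lemma reading_index_inj : injective reading_index.
Proof.
move=> [[i lt_i] [j lt_j]] [[i' lt_i'] [j' lt_j']]; rewrite /reading_index /= => eq_idx.
have w_gt0 : 0 < head 0 la by apply: leq_ltn_trans lt_j.
have ej : j = j'.
  by move: (congr1 (modn^~ (head 0 la)) eq_idx); rewrite /= !modnMDl !modn_small.
subst j'; move/addIn/eqP: eq_idx; rewrite eqn_pmul2r // => /eqP ei.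
by subst i'; congr (_, _); apply: val_inj.
Qed.

Definition defect T c := in_la c && (T c != row_set n c.1).

Definition first_defect T b :=
  defect T b && [forall c, defect T c ==> (reading_index b <= reading_index c)].

Definition flip T b : filling la n :=
  [ffun c => if c == b then toggle (T b) b.1 else T c].

Definition svt_inv T : filling la n :=
  if [pick b | first_defect T b] is Some b then flip T b else T.

Definition row_tableau : filling la n :=
  [ffun c => if in_la c then row_set n c.1 else set0].

Lemma first_defect_uniq T b b' : first_defect T b -> first_defect T b' -> b = b'.
Proof.
move=> /andP[bdef /forallP/(_ b') le_bb'] /andP[b'def /forallP/(_ b) le_b'b].
apply: reading_index_inj; apply/eqP.
by rewrite eqn_leq (implyP le_bb' b'def) (implyP le_b'b bdef).
Qed.

Lemma first_defect_exists T c : defect T c -> exists b, first_defect T b.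
Proof.
move=> cdef; have [b bdef min_b] := arg_minnP reading_index cdef.
by exists b; rewrite /first_defect bdef; apply/forallP => d; apply/implyP/min_b.
Qed.

Lemma before_first_defect T b c :
  first_defect T b -> in_la c -> reading_index c < reading_index b ->
  T c = row_set n c.1.
Proof.
case/andP=> _ /forallP/(_ c) + c_in; rewrite /defect c_in /= => min_b lt_cb.
by apply/eqP; move: min_b; rewrite leqNgt lt_cb implybF negbK.
Qed.

Lemma svt_invE T b : first_defect T b -> svt_inv T = flip T b.
Proof.
move=> bfirst; rewrite /svt_inv; case: pickP => [b' /first_defect_uniq/(_ bfirst)->//|].
by move/(_ b); rewrite bfirst.
Qed.

Lemma svt_inv_id T : (forall b, ~~ first_defect T b) -> svt_inv T = T.
Proof.
by move=> nodef; rewrite /svt_inv; case: pickP => // b; rewrite (negbTE (nodef b)).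
Qed.

Hypothesis la_part : is_partition la.

Lemma svt_row_geq T c : svt_spec T -> in_la c -> {in T c, forall x : 'I_n, c.1 <= x}.
Proof.
move=> svtT; case: c => [[i lt_i1] j]; elim: i lt_i1 => [//|i IH] lt_i1 c_in x xT /=.
pose a : cell := (Ordinal (ltnW lt_i1), j).
have a_in : in_la a := in_shape_up la_part c_in.
have /set0Pn[y yT] := svt_neq0 svtT a_in.
have := svt_col svtT a_in c_in erefl erefl yT xT.
by have /= := IH _ a_in y yT; lia.
Qed.

(* Rows (r = 0) and columns (r = 1) at once. *)
Lemma flip_adjacent T b c d r : svt_spec T -> first_defect T b ->
    in_la c -> in_la d -> d.1 = c.1 + r :> nat -> reading_index c < reading_index d ->
    {in T c & T d, forall x y : 'I_n, x + r <= y} ->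
  {in flip T b c & flip T b d, forall x y : 'I_n, x + r <= y}.
Proof.
move=> svtT bfirst c_in d_in ed lt_cd le_cd x y; rewrite !ffunE.
have /andP[/andP[b_in _] _] := bfirst.
case: (c =P b) => [ecb|ncb]; case: (d =P b) => [edb|ndb].
- by move: lt_cd; rewrite ecb edb ltnn.
- subst c => /mem_toggle/orP[/eqP xb yT|xT yT]; last exact: le_cd.
  by rewrite xb -ed; apply: svt_row_geq d_in _ yT.
- subst d; rewrite (before_first_defect bfirst c_in lt_cd) inE => /eqP-> .
  case/mem_toggle/orP => [/eqP-> | yT]; first by rewrite ed.
  by rewrite -ed; apply: svt_row_geq b_in _ yT.
- exact: le_cd.
Qed.

Lemma flip_spec T b : svt_spec T -> first_defect T b -> svt_spec (flip T b).
Proof.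
move=> svtT bfirst; have /andP[/andP[b_in bdef] _] := bfirst.
have flip_adj := flip_adjacent svtT bfirst.
split=> [c c_out|c c_in|c d c_in d_in e1 e2 x y xT yT|c d c_in d_in e1 e2 x y xT yT].
- rewrite ffunE; case: (c =P b) => [ecb|_]; last exact: svt_out.
  by move: c_out; rewrite ecb b_in.
- by rewrite ffunE; case: (c =P b) => [_|_]; [rewrite toggle_eq0 | exact: svt_neq0].
- rewrite -(addn0 x); apply: (flip_adj c d) xT yT => //; first by rewrite addn0.
    by rewrite /reading_index e1 e2 addnS.
  by move=> x' y' xT' yT'; rewrite addn0; apply: svt_row xT' yT'.
- rewrite -addn1; apply: (flip_adj c d) xT yT => //; first by rewrite addn1.
    by have := ltn_ord c.2; rewrite /reading_index e1 e2 mulSn; lia.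
  by move=> x' y' xT' yT'; rewrite addn1; apply: svt_col xT' yT'.
Qed.

Lemma svt_inv_spec T : svt_spec T -> svt_spec (svt_inv T).
Proof.
move=> svtT; case: (pickP (first_defect T)) => [b bfirst|nodef].
  by rewrite (svt_invE bfirst); apply: flip_spec.
by rewrite svt_inv_id // => b; rewrite nodef.
Qed.

Lemma first_defect_flip T b :
  svt_spec T -> first_defect T b -> first_defect (flip T b) b.
Proof.
move=> svtT /andP[/andP[b_in _] /forallP min_b].
rewrite /first_defect /defect b_in ffunE eqxx toggle_eq_row_set svt_neq0 //=.
apply/forallP => c; rewrite ffunE.
by case: (c =P b) => [->|_]; [rewrite leqnn implybT | exact: min_b].
Qed.

Lemma svt_invK T : svt_spec T -> svt_inv (svt_inv T) = T.
Proof.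
move=> svtT; case: (pickP (first_defect T)) => [b bfirst|nodef]; last first.
  by rewrite !svt_inv_id // => b; rewrite nodef.
rewrite (svt_invE bfirst) (svt_invE (first_defect_flip svtT bfirst)).
by apply/ffunP => c; rewrite !ffunE; case: (c =P b) => [->|//]; rewrite eqxx toggleK.
Qed.

Hypothesis la_le_n : size la <= n.

Lemma row_tableau_spec : svt_spec row_tableau.
Proof.
split=> [c c_out|c c_in|c d c_in d_in e1 _ x y|c d c_in d_in e1 _ x y];
  rewrite !ffunE.
- by rewrite (negbTE c_out).
- rewrite c_in; apply/set0Pn.
  by exists (Ordinal (leq_trans (ltn_ord c.1) la_le_n)); rewrite inE.
- by rewrite c_in d_in !inE => /eqP-> /eqP->; rewrite e1.
- by rewrite c_in d_in !inE => /eqP-> /eqP->; rewrite e1.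
Qed.

Lemma svt_inv_fixed T : svt_spec T -> (svt_inv T == T) = (T == row_tableau).
Proof.
move=> svtT; case: (pickP (first_defect T)) => [b bfirst|nodef].
  have /andP[/andP[b_in bdef] _] := bfirst.
  have lt_bn : b.1 < n := leq_trans (ltn_ord b.1) la_le_n.
  have -> : (T == row_tableau) = false.
    by apply: contraNF bdef => /eqP->; rewrite ffunE b_in.
  rewrite (svt_invE bfirst); apply: contraNF (toggle_neq (T b) lt_bn) => /eqP.
  by move/ffunP/(_ b); rewrite ffunE eqxx => ->.
have nodefect c : ~~ defect T c.
  by apply/negP => /first_defect_exists[b]; rewrite nodef.
rewrite svt_inv_id ?eqxx; last by move=> b; rewrite nodef.
apply/esym/eqP/ffunP => c; rewrite ffunE; case: ifPn => [c_in|/(svt_out svtT)//].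
by apply/eqP; move: (nodefect c); rewrite /defect c_in negbK.
Qed.

End Tableaux.

Theorem corollaryA2 (n : nat) (la : seq nat) :
  0 < n -> is_partition la -> size la <= n ->
  odd #|SVT la n|.
Proof.
move=> _ la_part la_le_n.
have svtE T : (T \in SVT la n) <-> svt_spec T by rewrite inE; apply: is_svtP.
rewrite (odd_card_involution (g := @svt_inv la n)).
- suff -> : [set T in SVT la n | svt_inv T == T] = [set row_tableau la n].
    by rewrite cards1.
  apply/setP => T; rewrite !inE; case: (boolP (is_svt T)) => [/is_svtP svtT|not_svt].
    by rewrite svt_inv_fixed.
  by apply/esym; apply: contraNF not_svt => /eqP->; apply/is_svtP/row_tableau_spec.
- by move=> T /svtE svtT; apply/svtE/svt_inv_spec.
- by move=> T /svtE; apply: svt_invK.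
Qed.
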